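(* Let $h \ge 2$ and $k \ge 3$ be integers. For every integer $i_0 \in [0,h-2]$, the sumset size set $\mathcal{R}_{\mathbf{Z}}(h,k)$ contains the arithmetic progression \[ \left\{ (i_0+1)b + (h-i_0)(h(k-2)+1) - \frac{(h+i_0+1)(h-i_0)(k-2)}{2} \;:\; b \in \big[(h-i_0)(k-2) - (k-3),\ (h-i_0)(k-2)\big] \right\}. \] In particular, $\mathcal{R}_{\mathbf{Z}}(h,k)$ contains the integer interval \[ \left[ \frac{h^2(k-2)}{2} + \frac{hk}{2} - k + 3,\ \frac{h^2(k-2)}{2} + \frac{hk}{2} \right]. \]
   Context: For a positive integer $h$ and a finite set $A$ of integers, $hA$ denotes the set of all sums $a_1+\cdots+a_h$ with $a_1,\ldots,a_h \in A$ (not necessarily distinct). The sumset size set is $\mathcal{R}_{\mathbf{Z}}(h,k) = \{ |hA| : A \subseteq \mathbf{Z},\ |A| = k\}$. For real $u,v$, the integer interval $[u,v]$ is $\{n \in \mathbf{Z} : u \le n \le v\}$. *)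

From mathcomp Require Import all_boot all_order all_algebra.
Set Implicit Arguments. Unset Strict Implicit. Unset Printing Implicit Defensive.
Import Order.TTheory GRing.Theory Num.Theory.
Local Open Scope ring_scope.

(* A finite set of integers is represented by a duplicate-free list A. *)

Fixpoint hsums (h : nat) (A : seq int) : seq int :=
  match h with
  | 0%N => [:: 0]
  | h'.+1 => [seq a + s | a <- A, s <- hsums h' A]
  end.

Definition sumset (h : nat) (A : seq int) : seq int := undup (hsums h A).

Definition RZ (h k : nat) (n : int) : Prop :=
  exists A : seq int, uniq A /\ size A = k /\ (size (sumset h A))%:Z = n.

From mathcomp Require Import all_boot all_order all_algebra zify.
Set Implicit Arguments.
Unset Strict Implicit.
Unset Printing Implicit Defensive.
Import Order.TTheory GRing.Theory Num.Theory.

(* With c = k - 2, take A = {0, ..., c} ∪ {b}.  Then hA is the union of the intervals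
   jb + [0, (h - j)c] for j <= h.  When c <= b, a representation jb + r with r >= b can be
   rewritten as (j + 1)b + (r - b), so n <= hb lies in hA iff n mod b <= (h - n div b)c.
   Hence the block [jb, (j + 1)b) meets hA in min(b, (h - j)c + 1) points and
   |hA| = 1 + sum_{m=1}^{h} min(b, mc + 1).  For nc < b <= (n + 1)c the sum is
   n + c C(n + 1, 2) + (h - n)b; n = h - i0 - 1 gives the progression, and i0 = 0 the
   final interval. *)

Lemma Posz_inj : injective Posz.
Proof. exact: can_inj absz_nat. Qed.

Definition segment_with_point (c b : nat) : seq int :=
  rcons [seq Posz i | i <- iota 0 c.+1] (Posz b).

Lemma size_segment_with_point c b : size (segment_with_point c b) = c.+2.
Proof. by rewrite size_rcons size_map size_iota. Qed.

Lemma segment_with_point_uniq c b : c < b -> uniq (segment_with_point c b).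
Proof.
move=> lt_cb; rewrite rcons_uniq map_inj_uniq ?iota_uniq ?andbT //; last exact: Posz_inj.
by rewrite mem_map ?mem_iota; [lia | exact: Posz_inj].
Qed.

Lemma mem_segment_with_point c b a :
  a \in segment_with_point c b <-> a = b \/ exists2 i, i <= c & a = i.
Proof.
rewrite mem_rcons in_cons; split.
- case/orP => [/eqP -> | /mapP [i]]; first by left.
  by rewrite mem_iota => /andP [_ lt_ic] ->; right; exists i.
- case=> [-> | [i le_ic ->]]; first by rewrite eqxx.
  by rewrite map_f ?orbT // mem_iota; lia.
Qed.

Lemma mem_hsums_segment_with_point h c b s :
  s \in hsums h (segment_with_point c b) <->
  exists j r, [/\ j <= h, r <= (h - j) * c & s = (j * b + r)%N].
Proof.
elim: h s => [|h IH] s.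
  rewrite /= mem_seq1; split=> [/eqP -> | [j [r [le_j0 le_r0 ->]]]]; first by exists 0, 0.
  by apply/eqP; congr Posz; lia.
split.
- case/allpairsP => [[a t]] /= [/mem_segment_with_point a_in /IH [j [r [le_jh le_r ->]]] ->].
  case: a_in => [-> | [i le_ic ->]].
  + by exists j.+1, r; rewrite subSS -PoszD; split=> //; congr Posz; lia.
  + exists j, (i + r); rewrite -PoszD; split; [lia | | by congr Posz; lia].
    by rewrite subSn // mulSn leq_add.
- case=> [[|j] [r [le_jh le_r ->]]]; apply/allpairsP.
  + exists (Posz (minn r c), Posz (r - minn r c)); rewrite -PoszD; split=> /=.
    * by apply/mem_segment_with_point; right; exists (minn r c) => //; exact: geq_minr.
    * by apply/IH; exists 0, (r - minn r c); rewrite subn0 in le_r *; split=> //; lia.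
    * by congr Posz; lia.
  + exists (Posz b, Posz (j * b + r)); rewrite -PoszD; split=> /=.
    * by apply/mem_segment_with_point; left.
    * by apply/IH; exists j, r; rewrite subSS in le_r.
    * by congr Posz; rewrite mulSn addnA.
Qed.

Definition residue_bounded (h c b n : nat) : bool := n %% b <= (h - n %/ b) * c.

Lemma hsum_normal_form h c b n : 0 < b -> c <= b ->
  (exists j r, [/\ j <= h, r <= (h - j) * c & n = j * b + r]) <->
  (n <= h * b) && residue_bounded h c b n.
Proof.
move=> b_gt0 le_cb; split=> [[j [r [le_jh le_r ->]]] | /andP [le_n bounded]].
- rewrite /residue_bounded divnMDl // modnMDl.
  have le_q : r %/ b <= h - j.
    rewrite -(leq_pmul2r b_gt0); apply: leq_trans (leq_divM r b) _.
    by apply: leq_trans le_r _; rewrite leq_mul2l le_cb orbT.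
  have le_qc : r %/ b * c <= r %/ b * b by rewrite leq_mul2l le_cb orbT.
  have r_eq := divn_eq r b.
  apply/andP; split; last by rewrite subnDA mulnBl; lia.
  have le_rb : r <= (h - j) * b by apply: leq_trans le_r _; rewrite leq_mul2l le_cb orbT.
  by rewrite -(subnKC le_jh) mulnDl leq_add2l.
- exists (n %/ b), (n %% b); split; [|exact: bounded|exact: divn_eq].
  by rewrite -(mulnK h b_gt0) leq_div2r.
Qed.

Lemma count_leq_iota t b : count (leq^~ t) (iota 0 b) = minn b t.+1.
Proof. by elim: b => // b IH; rewrite -addn1 iotaD count_cat IH /=; lia. Qed.

Section ResidueCount.

Variables h c b : nat.
Hypothesis b_gt0 : 0 < b.

Lemma count_residue_bounded_block j :
  count (residue_bounded h c b) (iota (j * b) b) = minn b ((h - j) * c).+1.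
Proof.
rewrite -[j * b]addn0 iotaDl count_map -count_leq_iota.
apply: eq_in_count => r; rewrite mem_iota => /andP [_ lt_rb] /=.
by rewrite /residue_bounded divnMDl // modnMDl divn_small // modn_small // addn0.
Qed.

Lemma count_residue_bounded_top m : m <= h ->
  count (residue_bounded h c b) (iota ((h - m) * b) (m * b)) =
  \sum_(0 <= i < m) minn b (i.+1 * c).+1.
Proof.
elim: m => [|m IH] le_mh; first by rewrite big_geq.
have hmE : h - m = (h - m.+1).+1 by lia.
rewrite big_nat_recr //= -IH ?(ltnW le_mh) // mulSn iotaD count_cat addnC.
by rewrite count_residue_bounded_block hmE mulSnr subKn.
Qed.

Lemma count_residue_bounded :
  count (residue_bounded h c b) (iota 0 (h * b).+1) =
  (\sum_(0 <= i < h) minn b (i.+1 * c).+1).+1.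
Proof.
have := count_residue_bounded_top (leqnn h); rewrite subnn mul0n => <-.
by rewrite -addn1 iotaD count_cat /= /residue_bounded add0n modnMl mulnK // subnn addn0 addn1.
Qed.

End ResidueCount.

Lemma size_sumset_segment_with_point h c b : 0 < b -> c <= b ->
  size (sumset h (segment_with_point c b)) =
  (\sum_(0 <= i < h) minn b (i.+1 * c).+1).+1.
Proof.
move=> b_gt0 le_cb; rewrite -count_residue_bounded // -size_filter.
rewrite -(size_map Posz); apply/perm_size/uniq_perm.
- exact: undup_uniq.
- by rewrite map_inj_uniq ?filter_uniq ?iota_uniq //; exact: Posz_inj.
move=> s; rewrite mem_undup; apply/idP/mapP.
- case/mem_hsums_segment_with_point=> j [r [le_jh le_r ->]].
  exists (j * b + r) => //; rewrite mem_filter mem_iota /= andbC ltnS.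
  by apply/hsum_normal_form => //; exists j, r.
- case=> n; rewrite mem_filter mem_iota /= ltnS => /andP [bounded le_n] ->.
  have /(hsum_normal_form _ _ b_gt0 le_cb) [j [r [le_jh le_r ->]]] :
    (n <= h * b) && residue_bounded h c b n by rewrite le_n.
  by apply/mem_hsums_segment_with_point; exists j, r.
Qed.

Lemma sum_succ_iota n : \sum_(0 <= i < n) i.+1 = 'C(n.+1, 2).
Proof. by rewrite -bin2_sum big_nat_recl. Qed.

Lemma sum_minn_blocks h c b n : n <= h -> n * c < b <= n.+1 * c ->
  \sum_(0 <= i < h) minn b (i.+1 * c).+1 = n + c * 'C(n.+1, 2) + (h - n) * b.
Proof.
move=> le_nh /andP [lt_b le_b].
rewrite (big_cat_nat (leq0n n) le_nh) /=.
have -> : \sum_(0 <= i < n) minn b (i.+1 * c).+1 = \sum_(0 <= i < n) (i.+1 * c + 1).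
  apply: eq_big_nat => i /andP [_ lt_in]; rewrite addn1; apply/minn_idPr.
  by apply: leq_ltn_trans lt_b; rewrite leq_mul2r lt_in orbT.
have -> : \sum_(n <= i < h) minn b (i.+1 * c).+1 = \sum_(n <= i < h) b.
  apply: eq_big_nat => i /andP [le_ni _]; apply/minn_idPl.
  by apply: leq_trans le_b (leqW _); rewrite leq_mul2r ltnS le_ni orbT.
rewrite sum_nat_const_nat big_split /= -big_distrl sum_succ_iota sum_nat_const_nat.
by rewrite subn0 muln1 /= (addnC _ n) [c * _]mulnC.
Qed.

Lemma RZ_segment_with_point h c b n : 0 < n <= h -> n * c < b <= n.+1 * c ->
  RZ h c.+2 (n.+1 + c * 'C(n.+1, 2) + (h - n) * b)%N.
Proof.
move=> /andP [n_gt0 le_nh] b_range; have /andP [lt_b _] := b_range.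
have lt_cb : c < b by apply: leq_ltn_trans lt_b; exact: leq_pmull.
exists (segment_with_point c b); split; first exact: segment_with_point_uniq.
split; first exact: size_segment_with_point.
rewrite size_sumset_segment_with_point ?(ltnW lt_cb) ?(leq_ltn_trans _ lt_cb) //.
by rewrite (sum_minn_blocks le_nh b_range) addSn.
Qed.

Lemma bin2S_mul2 n : 'C(n.+1, 2) * 2 = n.+1 * n.
Proof. by rewrite -[2]/(2`!) bin_ffact ffactSS ffactn1. Qed.

Local Open Scope ring_scope.

Lemma divz2_eq (x y : int) : x = y * 2 -> (x %/ 2)%Z = y.
Proof. by move->; rewrite mulzK. Qed.

Lemma RZ_progression h k i0 (b : int) : (2 <= h)%N -> (3 <= k)%N -> (i0 <= h - 2)%N ->
  (h%:Z - i0%:Z) * (k%:Z - 2) - (k%:Z - 3) <= b <= (h%:Z - i0%:Z) * (k%:Z - 2) ->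
  RZ h k ((i0%:Z + 1) * b + (h%:Z - i0%:Z) * (h%:Z * (k%:Z - 2) + 1)
          - (((h%:Z + i0%:Z + 1) * (h%:Z - i0%:Z) * (k%:Z - 2)) %/ 2)%Z).
Proof.
move=> le2h le3k le_i0 /andP [lo hi].
have [c kE] : exists c, k = c.+2 by exists (k - 2)%N; lia.
have [n hE] : exists n, h = (i0 + n.+1)%N by exists (h - i0.+1)%N; lia.
have [bn bE] : exists bn : nat, b = bn by exists `|b|%N; rewrite gez0_abs //; nia.
subst k h b; have C2 := bin2S_mul2 n.
rewrite (@divz2_eq _ ((i0.+1 * n.+1 + 'C(n.+1, 2)) * c)%N); last by nia.
by apply: (eq_ind _ (RZ _ _) (@RZ_segment_with_point _ c bn n _ _)); nia.
Qed.

Lemma RZ_interval h k (m : int) : (2 <= h)%N -> (3 <= k)%N ->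
  ((h%:Z ^+ 2 * (k%:Z - 2) + h%:Z * k%:Z) %/ 2)%Z - k%:Z + 3 <= m <=
  ((h%:Z ^+ 2 * (k%:Z - 2) + h%:Z * k%:Z) %/ 2)%Z ->
  RZ h k m.
Proof.
move=> le2h le3k; have [c kE] : exists c, k = c.+2 by exists (k - 2)%N; lia.
subst k; have C2 := bin2S_mul2 h.
rewrite (@divz2_eq _ ('C(h.+1, 2) * c + h)%N); last by nia.
move=> m_range.
have := RZ_progression (b := m - h%:Z * (h%:Z * c%:Z + 1) + ('C(h.+1, 2) * c)%N%:Z)
  le2h le3k (leq0n _).
rewrite (@divz2_eq _ ('C(h.+1, 2) * c)%N); last by nia.
by move=> progression; apply: (eq_ind _ (RZ _ _) (progression _)); nia.
Qed.

Theorem mainTheorem10 (h k : nat) (hh : (2 <= h)%N) (hk : (3 <= k)%N) :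
  (forall i0 : nat, (i0 <= h - 2)%N ->
     forall b : int,
       (h%:Z - i0%:Z) * (k%:Z - 2) - (k%:Z - 3) <= b <= (h%:Z - i0%:Z) * (k%:Z - 2) ->
       RZ h k ((i0%:Z + 1) * b + (h%:Z - i0%:Z) * (h%:Z * (k%:Z - 2) + 1)
               - (((h%:Z + i0%:Z + 1) * (h%:Z - i0%:Z) * (k%:Z - 2)) %/ 2)%Z))
  /\
  (forall n : int,
     ((h%:Z ^+ 2 * (k%:Z - 2) + h%:Z * k%:Z) %/ 2)%Z - k%:Z + 3 <= n <=
     ((h%:Z ^+ 2 * (k%:Z - 2) + h%:Z * k%:Z) %/ 2)%Z ->
     RZ h k n).
Proof.
by split=> [i0 le_i0 b | n]; [exact: RZ_progression | exact: RZ_interval].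
Qed.
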